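(* Let $n>1$, $a\in\mathcal{T}_n$ with $\operatorname{ran}(a)=\{a_1,\dots,a_p\}$ ($p=\operatorname{rank}(a)$), and put $n(a_i)=|a^{-1}(a_i)|$ for $1\le i\le p$. In the semigroup $(\mathcal{T}_n,*_a)$: for each $1\le m\le p$ there are exactly $S(n,m)$ $\mathcal{R}$-classes with more than one element consisting of maps of rank $m$, each of cardinality $$m!\sum_{1\le i_1<i_2<\cdots<i_m\le p} n(a_{i_1})\cdots n(a_{i_m});$$ these are all the multi-element $\mathcal{R}$-classes, so their number is $\sum_{m=1}^{p}S(n,m)$, and the number of one-element $\mathcal{R}$-classes equals $$n^n-\sum_{m=1}^{p}S(n,m)\,m!\sum_{1\le i_1<\cdots<i_m\le p} n(a_{i_1})\cdots n(a_{i_m}).$$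
   Context: $\mathcal{T}_n$ is the set of all maps $N\to N$, $N=\{1,\dots,n\}$. Maps are composed from left to right: $(xy)(i)=y(x(i))$. For fixed $a\in\mathcal{T}_n$, $x*_a y:=xay$. $\operatorname{ran}(x)$ is the image of $x$, $\operatorname{rank}(x)=|\operatorname{ran}(x)|$, $a^{-1}(a_i)$ is the full preimage of $a_i$. Green's relation: $x\mathcal{R}y$ iff $xS^1=yS^1$, where $S^1$ is the semigroup with an identity adjoined. $S(r,k)$ is the Stirling number of the second kind. *)

From mathcomp Require Import all_boot.
Set Implicit Arguments. Unset Strict Implicit. Unset Printing Implicit Defensive.

(* Full transformation monoid T_n : maps 'I_n -> 'I_n (points 0..n-1 stand for 1..n). *)
Definition Tn (n : nat) := {ffun 'I_n -> 'I_n}.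

(* Left-to-right composition: (x y)(i) = y (x i). *)
Definition tcomp n (x y : Tn n) : Tn n := [ffun i => y (x i)].

Definition sand n (a x y : Tn n) : Tn n := tcomp (tcomp x a) y.

Definition ran n (x : Tn n) : {set 'I_n} := [set x i | i : 'I_n].
Definition rank n (x : Tn n) : nat := #|ran x|.

(* Principal right ideal x S^1 in the semigroup (T_n, *_a). *)
Definition rideal n (a x : Tn n) : {set Tn n} := x |: [set sand a x z | z : Tn n].

Definition Rrel n (a x y : Tn n) : bool := rideal a x == rideal a y.

Definition Rclass n (a x : Tn n) : {set Tn n} := [set y | Rrel a x y].
Definition Rclasses n (a : Tn n) : {set {set Tn n}} := [set Rclass a x | x : Tn n].

Fixpoint stirling2 (n k : nat) : nat :=
  match n, k with
  | 0, 0 => 1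
  | 0, _.+1 => 0
  | _.+1, 0 => 0
  | n'.+1, k'.+1 => k'.+1 * stirling2 n' k'.+1 + stirling2 n' k'
  end.

Definition fibsize n (a : Tn n) (b : 'I_n) : nat := #|[set i | a i == b]|.

(* sum over i_1 < ... < i_m of n(a_{i_1}) ... n(a_{i_m}), i.e. over m-subsets of ran(a). *)
Definition fibesum n (a : Tn n) (m : nat) : nat :=
  \sum_(B : {set 'I_n} | (B \subset ran a) && (#|B| == m)) \prod_(b in B) fibsize a b.

From mathcomp Require Import all_boot perm.
Set Implicit Arguments. Unset Strict Implicit. Unset Printing Implicit Defensive.

(* In (T_n, *_a) the right ideal x S^1 is {x} together with the maps w with
   ker (x a) <= ker w.  If a is injective on ran x this is exactly the set of
   w with ker x <= ker w, and then x R y iff y has the same property and the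
   same kernel; otherwise the R-class of x is {x}.  Hence the R-classes with
   more than one element and rank m correspond to the partitions of N into m
   blocks (all of which are kernels of such maps when m <= rank a), and the
   class with kernel P is in bijection with the maps h from the m blocks to N
   for which a o h is injective; there are m! * sum n(a_i1)...n(a_im) of them.
   The number of singleton classes follows since the classes partition T_n. *)

Lemma card_in_bij (T1 T2 : finType) (D1 : {pred T1}) (D2 : {pred T2})
    (f : T1 -> T2) (g : T2 -> T1) :
  {in D1, forall x, f x \in D2} -> {in D2, forall y, g y \in D1} ->
  {in D1, cancel f g} -> {in D2, cancel g f} -> #|D1| = #|D2|.
Proof.
move=> fD gD fK gK; rewrite -(card_in_imset (can_in_inj fK)).
apply: eq_card => y; apply/imsetP/idP => [[x xD ->]|yD]; first exact: fD.
by exists (g y); rewrite ?gD ?gK.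
Qed.

Lemma card_mem_pairs (T : finType) (S : {set {set T}}) :
  #|[set u : {set T} * T | (u.1 \in S) && (u.2 \in u.1)]| = \sum_(B in S) #|B|.
Proof.
rewrite -sum1_card (eq_bigl (fun u => (u.1 \in S) && (u.2 \in u.1))) => [|u]; last first.
  by rewrite inE.
rewrite -(pair_big_dep (mem S) (fun B x => x \in B) (fun _ _ => 1)) /=.
by apply: eq_bigr => B _; rewrite sum1_card.
Qed.

Lemma sum_injective_prod (D T : finType) (F : T -> nat) :
  \sum_(g : {ffun D -> T} | injectiveb g) \prod_k F (g k)
    = #|D|`! * \sum_(B : {set T} | #|B| == #|D|) \prod_(b in B) F b.
Proof.
rewrite (partition_big (fun g : {ffun D -> T} => [set g k | k : D])
           (fun B => #|B| == #|D|)) => [|g /injectiveP ginj]; last by rewrite card_imset.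
rewrite big_distrr; apply: eq_bigr => B /eqP cB.
rewrite (eq_bigr (fun _ => \prod_(b in B) F b)); last first.
  by move=> g /andP[/injectiveP ginj /eqP <-]; rewrite big_imset //= => k l _ _ /ginj.
rewrite sum_nat_const; congr (_ * _).
rewrite -ffactnn -{1}cB -card_inj_ffuns_on; apply: eq_card => g; rewrite !inE.
apply/andP/andP => [[ginj /eqP <-]|[gB ginj]]; split => //.
  by apply/ffun_onP => k; apply: imset_f.
rewrite eqEcard card_imset ?cB; last exact/injectiveP.
by rewrite leqnn andbT; apply/subsetP => _ /imsetP[k _ ->]; apply: (ffun_onP gB).
Qed.

Lemma mem_preim_pblock (T : finType) (rT : eqType) (f : T -> rT) (D : {set T}) :
  {in D &, forall i j, (j \in pblock (preim_partition f D) i) = (f i == f j)}.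
Proof. by apply: pblock_equivalence_partition; split=> // /eqP ->. Qed.

Lemma eq_preim_partitionP (T : finType) (rT1 rT2 : eqType) (f : T -> rT1)
    (g : T -> rT2) (D : {set T}) :
  reflect {in D &, forall i j, (f i == f j) = (g i == g j)}
          (preim_partition f D == preim_partition g D).
Proof.
apply: (iffP eqP) => [E i j Di Dj | E].
  by rewrite -(mem_preim_pblock f Di Dj) E mem_preim_pblock.
apply: eq_in_imset => i Di; apply/setP => j; rewrite !inE.
by case Dj: (j \in D); rewrite //= E.
Qed.

Section SetPartitions.
Variable T : finType.
Implicit Types (x : T) (A B : {set T}) (P Q : {set {set T}}).

Definition set_partitions A m := [set P | partition P A && (#|P| == m)].

Lemma notin_partition_block P A B x : partition P A -> B \in P -> x \notin A -> x \notin B.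
Proof. by move=> pP BP; apply: contra; apply: subsetP (partitionS pP BP) x. Qed.

Lemma notin_blockD1 P A B x : partition P (A :\ x) -> B \in P -> x \notin B.
Proof. by move=> pP BP; apply: notin_partition_block pP BP _; rewrite setD11. Qed.

Lemma set1_notin_partitionD1 P A x : partition P (A :\ x) -> [set x] \notin P.
Proof. by move=> pP; apply: contraTN isT => /(notin_blockD1 pP); rewrite set11. Qed.

Lemma setU1_notin_partitionD1 P A B x : partition P (A :\ x) -> x |: B \notin P :\ B.
Proof.
move=> pP; apply: contraTN isT; rewrite inE => /andP[_ /(notin_blockD1 pP)].
by rewrite setU11.
Qed.

Lemma partition_set1U P A x : partition P A -> x \notin A ->
  partition ([set x] |: P) (x |: A).
Proof.
move=> pP xA; apply: partitionU1 => //; last by rewrite disjoints1.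
by apply/set0Pn; exists x; rewrite set11.
Qed.

Lemma partition_insert P A B x : partition P A -> B \in P -> x \notin A ->
  partition ((x |: B) |: (P :\ B)) (x |: A).
Proof.
move=> pP BP xA; have sBA := partitionS pP BP.
have -> : x |: A = (x |: B) :|: (A :\: B).
  apply/setP => y; rewrite !inE; case yB: (y \in B); rewrite ?orbT ?orbF //.
  by rewrite (subsetP sBA) ?orbT.
apply: partitionU1 (partitionD1 pP BP) _ _.
  by apply/set0Pn; exists x; rewrite setU11.
rewrite -setI_eq0; apply/eqP/setP => y; rewrite !inE.
by case: eqP => [->|_]; [rewrite (negPf xA) !andbF | case: (y \in B)].
Qed.

Lemma pblock_setD1_neq0 P A x : partition P A -> x \in A -> [set x] \notin P ->
  pblock P x :\ x != set0.
Proof.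
move=> pP xA xP; set B := pblock P x.
have BP : B \in P by rewrite pblock_mem ?(cover_partition pP).
have xB : x \in B by rewrite mem_pblock (cover_partition pP).
apply: contra xP => /eqP B0; suff <- : B = [set x] by [].
by rewrite -(setD1K xB) B0 setU0.
Qed.

Lemma pblock_setD1_notin P A x : partition P A -> x \in A -> [set x] \notin P ->
  pblock P x :\ x \notin P :\ pblock P x.
Proof.
move=> pP xA xP; set B := pblock P x; have tiP := partition_trivIset pP.
have BP : B \in P by rewrite pblock_mem ?(cover_partition pP).
have /set0Pn[y yBx] := pblock_setD1_neq0 pP xA xP.
have yB : y \in B by move: yBx; rewrite inE => /andP[].
apply/negP; rewrite !inE => /andP[neq BxP].
by rewrite -(def_pblock tiP BxP yBx) (def_pblock tiP BP yB) eqxx in neq.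
Qed.

Lemma partition_extract P A x : partition P A -> x \in A -> [set x] \notin P ->
  partition ((pblock P x :\ x) |: (P :\ pblock P x)) (A :\ x).
Proof.
move=> pP xA xP; set B := pblock P x.
have BP : B \in P by rewrite pblock_mem ?(cover_partition pP).
have xB : x \in B by rewrite mem_pblock (cover_partition pP).
have sBA := partitionS pP BP.
have -> : A :\ x = (B :\ x) :|: (A :\: B).
  apply/setP => y; rewrite !inE; case yB: (y \in B) => /=.
    by rewrite (subsetP sBA y yB) andbT orbF.
  by case: (eqVneq y x) yB => [->|]; rewrite ?xB ?andbF.
apply: partitionU1 (partitionD1 pP BP) (pblock_setD1_neq0 pP xA xP) _.
rewrite -setI_eq0; apply/eqP/setP => y; rewrite !inE.
by case: (y \in B); rewrite ?andbF.
Qed.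

Lemma card_set_partitions_set1 A m x : x \in A ->
  #|[set P in set_partitions A m.+1 | [set x] \in P]| = #|set_partitions (A :\ x) m|.
Proof.
move=> xA; apply: (@card_in_bij _ _ _ _ (fun P => P :\ [set x]) (fun Q => [set x] |: Q)).
- move=> P /[!inE] /andP[/andP[pP /eqP cP] xP].
  rewrite (cardsD1 [set x]) xP add1n in cP; case: cP => cP.
  by rewrite partitionD1 //= cP.
- move=> Q /[!inE] /andP[pQ /eqP cQ].
  rewrite eqxx cardsU1 (set1_notin_partitionD1 pQ) cQ -{1}(setD1K xA).
  by rewrite partition_set1U ?setD11 // add1n eqxx.
- by move=> P /[!inE] /andP[_ xP]; rewrite setD1K.
- by move=> Q /[!inE] /andP[pQ _]; rewrite setU1K ?(set1_notin_partitionD1 pQ).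
Qed.

(* Removing x from its block is inverse to inserting x into a block. *)
Lemma card_set_partitions_notset1 A m x : x \in A ->
  #|[set P in set_partitions A m.+1 | [set x] \notin P]|
    = m.+1 * #|set_partitions (A :\ x) m.+1|.
Proof.
move=> xA; set S := set_partitions (A :\ x) m.+1.
have -> : m.+1 * #|S| = #|[set u | (u.1 \in S) && (u.2 \in u.1)]|.
  rewrite card_mem_pairs (eq_bigr (fun _ => m.+1)) ?sum_nat_const 1?mulnC // => P.
  by rewrite inE => /andP[_ /eqP].
pose extract P := ((pblock P x :\ x) |: (P :\ pblock P x), pblock P x :\ x).
pose insert u := (x |: u.2) |: (u.1 :\ u.2).
have insertP Q B : partition Q (A :\ x) -> B \in Q -> partition (insert (Q, B)) A.
  by move=> pQ BQ; rewrite -{1}(setD1K xA) partition_insert ?setD11.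
apply: (@card_in_bij _ _ _ _ extract insert).
- move=> P /[!inE] /andP[/andP[pP /eqP cP] xP] /=.
  rewrite eqxx andbT partition_extract // cardsU1 (pblock_setD1_notin pP) //.
  by rewrite -cP (cardsD1 (pblock P x) P) pblock_mem ?(cover_partition pP) ?eqxx.
- move=> [Q B] /[!inE] /= /andP[/andP[pQ /eqP cQ] BQ].
  have cQB : #|Q :\ B| = m by move: cQ; rewrite (cardsD1 B Q) BQ add1n => -[].
  rewrite cardsU1 (setU1_notin_partitionD1 _ pQ) cQB add1n eqxx andbT insertP //=.
  rewrite (negPf (set1_notin_partitionD1 pQ)) andbF orbF.
  have /set0Pn[y yB] := partition_neq0 pQ BQ.
  apply/eqP => /setP/(_ y); rewrite !inE yB orbT => /eqP yx.
  by move: (notin_blockD1 pQ BQ); rewrite -yx yB.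
- move=> P /[!inE] /andP[/andP[pP _] xP].
  have xB : x \in pblock P x by rewrite mem_pblock (cover_partition pP).
  have BP : pblock P x \in P by rewrite pblock_mem ?(cover_partition pP).
  by rewrite /insert /= setD1K // setU1K ?(pblock_setD1_notin pP) // setD1K.
- move=> [Q B] /[!inE] /= /andP[/andP[pQ _] BQ].
  have tiI := partition_trivIset (insertP Q B pQ BQ).
  rewrite /extract (def_pblock tiI (setU11 _ _) (setU11 _ _)) /=.
  by rewrite !setU1K ?(setU1_notin_partitionD1 _ pQ) ?(notin_blockD1 pQ) ?setD1K.
Qed.

Lemma card_set_partitions A m : #|set_partitions A m| = stirling2 #|A| m.
Proof.
move cA : #|A| => k; elim: k A m cA => [|k IHk] A m cA.
  have -> : A = set0 by apply/eqP; rewrite -cards_eq0 cA.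
  have -> : set_partitions set0 m = if m == 0 then [set set0] else set0.
    apply/setP => P; rewrite !inE partition_set0.
    by case: m => [|m] /=; rewrite ?inE; case: (eqVneq P set0) => [->|] //=; rewrite cards0.
  by case: m => [|m]; rewrite ?cards1 ?cards0.
have [x xA] : exists x, x \in A by apply/card_gt0P; rewrite cA.
have cAx : #|A :\ x| = k by move: cA; rewrite (cardsD1 x) xA add1n => -[].
case: m => [|m].
  apply/eqP; rewrite cards_eq0; apply/eqP/setP => P; rewrite !inE cards_eq0.
  apply/negP => /andP[pP /eqP P0].
  by move: xA; rewrite -(cover_partition pP) P0 /cover big_set0 inE.
pose X1 := [set P : {set {set T}} | [set x] \in P].
rewrite -(cardsID X1) /= addnC.
have -> : set_partitions A m.+1 :&: X1 = [set P in set_partitions A m.+1 | [set x] \in P].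
  by apply/setP => P; rewrite !inE.
have -> : set_partitions A m.+1 :\: X1 = [set P in set_partitions A m.+1 | [set x] \notin P].
  by apply/setP => P; rewrite !inE andbC.
by rewrite card_set_partitions_set1 // card_set_partitions_notset1 // !IHk.
Qed.

End SetPartitions.

Section SandwichSemigroup.
Variables (n : nat) (a : Tn n).
Implicit Types x y z u w : Tn n.

Lemma tcompE x y i : tcomp x y i = y (x i).
Proof. by rewrite ffunE. Qed.

Definition ker_sub u w := [forall i, forall j, (u i == u j) ==> (w i == w j)].

Lemma ker_subP u w : reflect (forall i j, u i = u j -> w i = w j) (ker_sub u w).
Proof.
apply: (iffP forallP) => [H i j /eqP uij | H i]; first exact/eqP/(implyP (forallP (H i) j)).
by apply/forallP => j; apply/implyP => /eqP/H/eqP.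
Qed.

Lemma ker_sub_trans u v w : ker_sub u v -> ker_sub v w -> ker_sub u w.
Proof. by move=> /ker_subP uv /ker_subP vw; apply/ker_subP => i j /uv/vw. Qed.

Lemma ker_sub_tcomp x y : ker_sub x (tcomp x y).
Proof. by apply/ker_subP => i j xij; rewrite !tcompE xij. Qed.

Definition kernel x := preim_partition x [set: 'I_n].

Lemma kernelP x : partition (kernel x) [set: 'I_n].
Proof. exact: preim_partitionP. Qed.

Lemma kernel_eqP x y :
  reflect (forall i j, (x i == x j) = (y i == y j)) (kernel x == kernel y).
Proof. by apply: (iffP (eq_preim_partitionP _ _ _)) => E i j *; apply: E. Qed.

Lemma kernel_partitionP x P : partition P [set: 'I_n] ->
  reflect (forall i j, (x i == x j) = (pblock P i == pblock P j)) (kernel x == P).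
Proof.
move=> pP; rewrite /kernel -[X in _ == X](preim_partition_pblock pP).
by apply: (iffP (eq_preim_partitionP _ _ _)) => E i j *; apply: E.
Qed.

Lemma kernel_pblockE x i j : (pblock (kernel x) i == pblock (kernel x) j) = (x i == x j).
Proof.
rewrite eq_pblock ?(partition_trivIset (kernelP x)) ?(cover_partition (kernelP x)) //.
by rewrite /kernel mem_preim_pblock ?inE.
Qed.

Lemma card_kernel x : #|kernel x| = rank x.
Proof.
have -> : kernel x = (fun b => [set j | b == x j]) @: ran x.
  rewrite /ran -imset_comp; apply/setP => B.
  by apply/imsetP/imsetP => -[i _ ->]; exists i => //; apply/setP => j; rewrite !inE.
rewrite card_in_imset // => _ b /imsetP[i _ ->] _ /setP/(_ i).
by rewrite !inE eqxx => /esym/eqP.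
Qed.

Lemma kernel_ker_sub x y : ker_sub x y -> ker_sub y x -> kernel x == kernel y.
Proof.
move=> /ker_subP xy /ker_subP yx; apply/kernel_eqP => i j.
by apply/eqP/eqP => [/xy|/yx].
Qed.

Lemma ker_sub_kernel u v w : kernel u == kernel v -> ker_sub u w = ker_sub v w.
Proof.
by move=> /kernel_eqP uv; apply: eq_forallb => i; apply: eq_forallb => j; rewrite uv.
Qed.

Lemma sand_image x : [set sand a x z | z : Tn n] = [set w | ker_sub (tcomp x a) w].
Proof.
apply/setP => w; rewrite inE; apply/imsetP/ker_subP => [[z _ ->] i j xaij | xa_w].
  by rewrite !tcompE -!(tcompE x a) xaij.
exists [ffun b => if [pick i | tcomp x a i == b] is Some i then w i else b] => //.
apply/ffunP => i; rewrite /sand !tcompE ffunE.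
case: pickP => [j /eqP xaj | /(_ i)]; last by rewrite tcompE eqxx.
by apply: xa_w; rewrite xaj tcompE.
Qed.

Lemma rideal_sand x : rideal a x = x |: [set w | ker_sub (tcomp x a) w].
Proof. by rewrite /rideal sand_image. Qed.

(* Equivalently: a is injective on ran x, or x lies in x *_a T_n. *)
Definition ran_inj x := ker_sub (tcomp x a) x.

Lemma ran_injP x : reflect {in ran x &, injective a} (ran_inj x).
Proof.
apply: (iffP (ker_subP _ _)) => [inj _ _ /imsetP[i _ ->] /imsetP[j _ ->] | inj i j].
  by rewrite -!tcompE => /inj.
by rewrite !tcompE => /inj; apply; apply: imset_f.
Qed.

Lemma kernel_ran_inj x : ran_inj x -> kernel (tcomp x a) == kernel x.
Proof. by move=> xinj; apply: kernel_ker_sub (ker_sub_tcomp x a). Qed.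

Lemma rideal_ran_inj x : ran_inj x -> rideal a x = [set w | ker_sub (tcomp x a) w].
Proof. by move=> xinj; rewrite rideal_sand; apply/setUidPr; rewrite sub1set inE. Qed.

Lemma mem_Rclass x : x \in Rclass a x.
Proof. by rewrite inE /Rrel. Qed.

Lemma Rrel_neq x y : Rrel a x y -> x != y ->
  [&& ran_inj x, ran_inj y & kernel x == kernel y].
Proof.
have sub_ya u v : Rrel a u v -> u != v -> ker_sub (tcomp v a) u.
  move=> /eqP Ruv uv; have : u \in rideal a v by rewrite -Ruv rideal_sand setU11.
  by rewrite rideal_sand !inE (negPf uv).
move=> Rxy xy; have ya_x := sub_ya _ _ Rxy xy.
have xa_y : ker_sub (tcomp x a) y by apply: sub_ya; rewrite /Rrel eq_sym.
have x_y := ker_sub_trans (ker_sub_tcomp x a) xa_y.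
have y_x := ker_sub_trans (ker_sub_tcomp y a) ya_x.
by rewrite /ran_inj (ker_sub_trans xa_y y_x) (ker_sub_trans ya_x x_y) kernel_ker_sub.
Qed.

Lemma Rrel_kernel x y : ran_inj x -> ran_inj y -> kernel x == kernel y -> Rrel a x y.
Proof.
move=> xinj yinj xy; rewrite /Rrel !rideal_ran_inj //; apply/eqP/setP => w.
rewrite !inE; apply: ker_sub_kernel; rewrite (eqP (kernel_ran_inj xinj)) (eqP xy).
by rewrite eq_sym kernel_ran_inj.
Qed.

Lemma Rclass_ran_inj x : ran_inj x ->
  Rclass a x = [set y | ran_inj y && (kernel y == kernel x)].
Proof.
move=> xinj; apply/setP => y; rewrite !inE; apply/idP/andP => [Rxy | [yinj yx]].
  have [<-|xy] := eqVneq x y; first by rewrite eqxx.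
  by case/and3P: (Rrel_neq Rxy xy) => _ -> /=; rewrite eq_sym.
by apply: Rrel_kernel; rewrite // eq_sym.
Qed.

Lemma Rclass_not_ran_inj x : ~~ ran_inj x -> Rclass a x = [set x].
Proof.
move=> xinj; apply/setP => y; rewrite !inE; apply/idP/eqP => [Rxy | ->]; last exact: eqxx.
apply: contraNeq xinj => yx; rewrite eq_sym in yx.
by case/and3P: (Rrel_neq Rxy yx).
Qed.

Lemma card_lifts (D : finType) (g : {ffun D -> 'I_n}) :
  #|[set h : {ffun D -> 'I_n} | [ffun k => a (h k)] == g]| = \prod_k fibsize a (g k).
Proof.
transitivity #|family (fun k => [pred i | a i == g k])|.
  apply: eq_card => h; rewrite !inE.
  apply/eqP/familyP => [<- k | hg]; first by rewrite ffunE inE.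
  by apply/ffunP => k; rewrite ffunE; apply/eqP/hg.
rewrite card_family foldrE big_image; apply: eq_bigr => k _.
by apply: eq_card => i; rewrite !inE.
Qed.

Lemma fibesumE m :
  fibesum a m = \sum_(B : {set 'I_n} | #|B| == m) \prod_(b in B) fibsize a b.
Proof.
rewrite [RHS](bigID (fun B : {set 'I_n} => B \subset ran a)) /= [X in _ + X]big1 ?addn0.
  by apply: eq_bigl => B; rewrite andbC.
move=> B /andP[_ /subsetPn[b bB bNa]]; rewrite (bigD1 b bB) /=.
suff -> : fibsize a b = 0 by [].
by apply: eq_card0 => i; rewrite !inE; apply: contraNF bNa => /eqP <-; apply: imset_f.
Qed.

Lemma card_comp_injective (D : finType) :
  #|[set h : {ffun D -> 'I_n} | injectiveb (a \o h)]| = #|D|`! * fibesum a #|D|.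
Proof.
pose ah (h : {ffun D -> 'I_n}) := [ffun k => a (h k)].
rewrite fibesumE -sum_injective_prod -sum1_card.
rewrite (partition_big ah (fun g => injectiveb g)) => [|h]; last first.
  by rewrite inE => /injectiveP hinj; apply/injectiveP => k l; rewrite !ffunE => /hinj.
apply: eq_bigr => g /injectiveP ginj; rewrite -card_lifts -sum1_card.
apply: eq_bigl => h; rewrite !inE andb_idl // => /eqP ahg.
by apply/injectiveP => k l /= alk; apply: ginj; rewrite -ahg !ffunE.
Qed.

(* The class is parametrized by the values taken on the blocks of P, listed in
   the order of enum P. *)
Lemma card_ran_inj_kernel (i0 : 'I_n) P : partition P [set: 'I_n] ->
  #|[set y | ran_inj y && (kernel y == P)]| = #|P|`! * fibesum a #|P|.
Proof.
move=> pP; have PP i : pblock P i \in P by rewrite pblock_mem ?(cover_partition pP).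
pose rep B := transversal_repr i0 (transversal P [set: 'I_n]) B.
have repK : {in P, cancel rep (pblock P)} := transversal_reprK (transversalP pP) i0.
pose blk i : 'I_#|P| := enum_rank_in (PP i0) (pblock P i).
have blkE i j : (blk i == blk j) = (pblock P i == pblock P j).
  apply/eqP/eqP => [/(congr1 enum_val)|E]; last by rewrite /blk E.
  by rewrite !enum_rankK_in.
rewrite -[in RHS](card_ord #|P|) -card_comp_injective.
apply: (@card_in_bij _ _ _ _ (fun y => [ffun k => y (rep (enum_val k))])
                             (fun h => [ffun i => h (blk i)])).
- move=> y /[!inE] /andP[/ker_subP yinj /(kernel_partitionP _ pP) yP].
  apply/injectiveP => k l; rewrite /= !ffunE -!tcompE => /yinj/eqP.
  by rewrite yP !repK ?enum_valP // => /eqP/enum_val_inj.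
- move=> h /[!inE] /injectiveP hinj.
  have hE i j : (h (blk i) == h (blk j)) = (pblock P i == pblock P j).
    by rewrite -blkE; apply/eqP/eqP => [E|->] //; apply: hinj; rewrite /= E.
  apply/andP; split; last by apply/kernel_partitionP => // i j; rewrite !ffunE hE.
  by apply/ker_subP => i j; rewrite !tcompE !ffunE => /hinj ->.
- move=> y /[!inE] /andP[_ /(kernel_partitionP _ pP) yP]; apply/ffunP => i.
  by rewrite !ffunE enum_rankK_in //; apply/eqP; rewrite yP repK.
- by move=> h _; apply/ffunP => k; rewrite !ffunE /blk repK ?enum_valP // enum_valK_in.
Qed.

(* Send the k-th block of P to the k-th point of a transversal of ker a, on
   which a is injective. *)
Lemma exists_ran_inj_kernel (i0 : 'I_n) P :
  partition P [set: 'I_n] -> #|P| <= rank a -> exists2 x, ran_inj x & kernel x = P.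
Proof.
move=> pP leP; have PP i : pblock P i \in P by rewrite pblock_mem ?(cover_partition pP).
pose X := transversal (kernel a) [set: 'I_n].
have trX : is_transversal X (kernel a) [set: 'I_n] := transversalP (kernelP a).
have aX : {in X &, injective a}.
  move=> u v uX vX auv; apply: (pblock_inj trX uX vX).
  by apply/eqP; rewrite kernel_pblockE auv.
pose e := enum X; pose idx i := index (pblock P i) (enum P).
have idx_lt i : idx i < size e.
  rewrite -cardE (card_transversal trX) card_kernel (leq_trans _ leP) //.
  by rewrite cardE index_mem mem_enum.
pose x := [ffun i => nth i0 e (idx i)].
have xX i : x i \in X by rewrite ffunE -mem_enum mem_nth.
have xE i j : (x i == x j) = (pblock P i == pblock P j).
  rewrite !ffunE nth_uniq ?enum_uniq //; apply/eqP/eqP => [|E]; last by rewrite /idx E.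
  by apply: index_inj; rewrite ?mem_enum.
exists x; last by apply/eqP/kernel_partitionP.
by apply/ran_injP => _ _ /imsetP[i _ ->] /imsetP[j _ ->]; apply: aX.
Qed.

End SandwichSemigroup.

Section RclassCount.
Variables (n : nat) (a : Tn n).
Hypothesis n_gt1 : 1 < n.
Let i0 : 'I_n := Ordinal (ltnW n_gt1).

Definition Rclasses_rank m :=
  [set C in Rclasses a | (1 < #|C|) && [forall x in C, rank x == m]].

Lemma rank_ran_inj x : ran_inj a x -> 0 < rank x <= rank a.
Proof.
move=> /ran_injP ainj; apply/andP; split.
  by apply/card_gt0P; exists (x i0); apply: imset_f.
rewrite /rank -(card_in_imset ainj); apply: subset_leq_card.
by apply/subsetP => _ /imsetP[_ /imsetP[i _ ->] ->]; apply: imset_f.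
Qed.

(* Swap two values of x, or move the value of a constant x. *)
Lemma Rclass_gt1 x : ran_inj a x -> 1 < #|Rclass a x|.
Proof.
move=> xinj; pose c := x i0.
have [y [yinj yx y_x]] : exists y, [/\ ran_inj a y, kernel y == kernel x & y i0 != c].
  have [/existsP[j xj] | /existsPn xc] := boolP [exists j, x j != c].
    exists [ffun k => tperm c (x j) (x k)]; split; last by rewrite ffunE -/c tpermL.
      have yran k : tperm c (x j) (x k) \in ran x by case: tpermP => *; apply: imset_f.
      apply/ker_subP => k l; rewrite !tcompE !ffunE.
      exact: (ran_injP _ _ xinj) (yran k) (yran l).
    by apply/kernel_eqP => k l; rewrite !ffunE (inj_eq perm_inj).
  have [d dc] : exists d : 'I_n, d != c.
    by case: (eqVneq c i0) => [->|ci0]; [exists (Ordinal n_gt1) | exists i0; rewrite eq_sym].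
  exists [ffun => d]; split; last by rewrite ffunE.
    by apply/ker_subP => k l; rewrite !ffunE.
  apply/kernel_eqP => k l; rewrite !ffunE eqxx.
  by have := xc k; have := xc l; rewrite !negbK => /eqP -> /eqP ->; rewrite eqxx.
apply/card_gt1P; exists x, y; rewrite Rclass_ran_inj // !inE xinj yinj yx eqxx.
by split=> //; apply: contraNneq y_x => <-.
Qed.

Lemma Rclass_multi C : C \in Rclasses a -> 1 < #|C| ->
  exists2 x, ran_inj a x & C = Rclass a x.
Proof.
case/imsetP => x _ -> C1; exists x => //.
by apply: contraTT C1 => /Rclass_not_ran_inj ->; rewrite cards1.
Qed.

Lemma Rclass_rankE x m : ran_inj a x ->
  [forall y in Rclass a x, rank y == m] = (rank x == m).
Proof.
move=> xinj; apply/forall_inP/eqP => [/(_ x (mem_Rclass a x))/eqP // | <- y].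
by rewrite Rclass_ran_inj // inE -!card_kernel => /andP[_ /eqP ->].
Qed.

Lemma Rclass_rank_range C : C \in Rclasses a -> 1 < #|C| ->
  exists2 m, 1 <= m <= rank a & [forall x in C, rank x == m].
Proof.
move=> CR C1; have [x xinj ->] := Rclass_multi CR C1.
by exists (rank x); rewrite ?rank_ran_inj ?Rclass_rankE.
Qed.

Lemma Rclasses_rankE m :
  Rclasses_rank m = Rclass a @: [set x | ran_inj a x && (rank x == m)].
Proof.
apply/setP => C; rewrite !inE; apply/andP/imsetP => [[CR /andP[C1 Cm]] | [x]].
  have [x xinj defC] := Rclass_multi CR C1.
  by exists x => //; rewrite inE xinj -(Rclass_rankE _ xinj) -defC.
rewrite inE => /andP[xinj xm] ->; split; first exact: imset_f.
by rewrite Rclass_gt1 // Rclass_rankE.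
Qed.

Lemma card_Rclasses_rank m : m <= rank a -> #|Rclasses_rank m| = stirling2 n m.
Proof.
move=> le_m; pose S := [set x | ran_inj a x && (rank x == m)].
pose cls P := [set y | ran_inj a y && (kernel y == P)].
have -> : Rclasses_rank m = cls @: (@kernel n @: S).
  rewrite Rclasses_rankE -imset_comp; apply: eq_in_imset => x.
  by rewrite inE => /andP[xinj _]; apply: Rclass_ran_inj.
have -> : @kernel n @: S = set_partitions [set: 'I_n] m.
  apply/setP => P; rewrite inE; apply/imsetP/andP => [[x] | [pP /eqP cP]].
    by rewrite inE => /andP[_ /eqP xm] ->; rewrite kernelP card_kernel xm.
  have le_P : #|P| <= rank a by rewrite cP.
  have [x xinj xP] := exists_ran_inj_kernel i0 pP le_P.
  by exists x; rewrite // inE xinj -card_kernel xP cP /=.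
rewrite card_in_imset ?card_set_partitions ?cardsT ?card_ord // => P Q /[!inE].
move=> /andP[pP /eqP cP] _ PQ; have le_P : #|P| <= rank a by rewrite cP.
have [x xinj xP] := exists_ran_inj_kernel i0 pP le_P.
have : x \in cls Q by rewrite -PQ !inE xinj xP eqxx.
by rewrite inE -xP => /andP[_ /eqP].
Qed.

Lemma card_Rclass_rank C m : C \in Rclasses a -> 1 < #|C| ->
  [forall x in C, rank x == m] -> #|C| = m`! * fibesum a m.
Proof.
move=> CR C1; have [x xinj ->] := Rclass_multi CR C1.
rewrite Rclass_rankE // -card_kernel => /eqP <-.
by rewrite Rclass_ran_inj // (card_ran_inj_kernel a i0) ?kernelP.
Qed.

Lemma sum_card_Rclasses_rank m : m <= rank a ->
  \sum_(C in Rclasses_rank m) #|C| = stirling2 n m * (m`! * fibesum a m).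
Proof.
move=> le_m; rewrite -card_Rclasses_rank // -sum_nat_const.
by apply: eq_bigr => C /[!inE] /and3P[CR C1 Cm]; apply: card_Rclass_rank.
Qed.

Lemma sum_multi_Rclasses (F : {set Tn n} -> nat) :
  \sum_(C in [set C in Rclasses a | 1 < #|C|]) F C
    = \sum_(1 <= m < (rank a).+1) \sum_(C in Rclasses_rank m) F C.
Proof.
under [RHS]eq_bigr => m _.
  rewrite (eq_bigl (fun C => (C \in [set C in Rclasses a | 1 < #|C|])
                             && [forall x in C, rank x == m])) => [|C]; last first.
    by rewrite !inE andbA.
  rewrite big_mkcondr; over.
rewrite exchange_big /=; apply: eq_bigr => C /[!inE] /andP[CR C1].
have [x xinj ->] := Rclass_multi CR C1; under eq_bigr do rewrite Rclass_rankE //.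
rewrite -big_mkcond (eq_bigl (fun m => m == rank x)) => [|m]; last by rewrite eq_sym.
by rewrite big_nat1_eq ltnS rank_ran_inj.
Qed.

End RclassCount.

Lemma partition_Rclasses n (a : Tn n) : partition (Rclasses a) [set: Tn n].
Proof.
have -> : Rclasses a = equivalence_partition (Rrel a) [set: Tn n].
  by apply/setP => C; apply/imsetP/imsetP => -[x _ ->]; exists x => //;
    apply/setP => y; rewrite !inE.
by apply: equivalence_partitionP => x y z _ _ _; split=> [|/eqP Rxy]; rewrite /Rrel ?Rxy.
Qed.

Lemma card_Rclasses_split n (a : Tn n) :
  #|[set C in Rclasses a | #|C| == 1]| + \sum_(C in [set C in Rclasses a | 1 < #|C|]) #|C|
    = n ^ n.
Proof.
have -> : n ^ n = #|[set: Tn n]| by rewrite cardsT card_ffun !card_ord.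
rewrite (card_partition (partition_Rclasses a)).
rewrite [RHS](bigID (fun C : {set Tn n} => #|C| == 1)) /=; congr (_ + _).
  by rewrite -sum1_card; apply: eq_big => C; rewrite !inE // => /andP[_ /eqP ->].
apply: eq_bigl => C; rewrite inE; case/boolP: (C \in Rclasses a) => //= /imsetP[x _ ->].
have : 0 < #|Rclass a x| by apply/card_gt0P; exists x; apply: mem_Rclass.
by case: #|_| => [|[|k]].
Qed.

Theorem proposition7 (n : nat) (a : Tn n) : 1 < n ->
  let p := rank a in
  (forall m, 1 <= m <= p ->
     #|[set C in Rclasses a | (1 < #|C|) && [forall x in C, rank x == m]]|
       = stirling2 n m
     /\ (forall C, C \in Rclasses a -> 1 < #|C| -> [forall x in C, rank x == m] ->
           #|C| = m`! * fibesum a m))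
  /\ (forall C, C \in Rclasses a -> 1 < #|C| ->
        exists2 m, 1 <= m <= p & [forall x in C, rank x == m])
  /\ #|[set C in Rclasses a | 1 < #|C|]| = \sum_(1 <= m < p.+1) stirling2 n m
  /\ #|[set C in Rclasses a | #|C| == 1]|
       = n ^ n - \sum_(1 <= m < p.+1) stirling2 n m * (m`! * fibesum a m).
Proof.
move=> n_gt1 p; split.
  move=> m /andP[_ le_mp]; split; first exact: card_Rclasses_rank.
  by move=> C; apply: card_Rclass_rank.
split; first exact: Rclass_rank_range.
split.
  rewrite -sum1_card sum_multi_Rclasses //; apply: eq_big_nat => m /andP[_ le_mp].
  by rewrite sum1_card card_Rclasses_rank.
rewrite -(card_Rclasses_split a) sum_multi_Rclasses //.
rewrite (@eq_big_nat _ _ _ _ _ _ (fun m => stirling2 n m * (m`! * fibesum a m))) ?addnK //.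
by move=> m /andP[_ le_mp]; apply: sum_card_Rclasses_rank.
Qed.
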